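(* Let $(X,d)$ be a metric space, $\mu$ a non-atomic Borel measure on $X$, $m$ a Borel measure on $X$, $0<p<\infty$, and let $\Gamma^*\subset\Gamma^\mu$ be a family of paths closed under taking non-trivial subpaths such that any two points of $X$ are joined by a path in $\Gamma^*$. Let $F$ be a closed subset of $X$ and let $f:X\to\mathbb R$ be $ACC_p$ with $f=0$ $m$-almost everywhere on $F$. If $\rho$ is an upper gradient of $f$, then $\rho\chi_{X\setminus F}$ is a $p$-weak upper gradient of $f$.
   Context: A path is a continuous map $\gamma:[a,b]\to X$; a subpath is a restriction to a subinterval, trivial if that interval is a point; $\mathrm{Im}(\gamma)=\gamma([a,b])$. $\mu$ non-atomic: $\mu(\{x\})=0$ for all $x$. $\Gamma^\mu$ is the set of all non-trivial injective paths $\gamma$ with $0<\mu(\mathrm{Im}(\tilde\gamma))<\infty$ for every non-trivial subpath $\tilde\gamma$. For Borel $g\ge0$, $\int_\gamma g:=\int_{\mathrm{Im}(\gamma)}g\,d\mu$. For $\gamma:[a,b]\to X$ in $\Gamma^\mu$, $h(\gamma)=\mu(\mathrm{Im}(\gamma))$, $\nu_\gamma(x)=\mu(\gamma([a,x]))$ (a bijection onto $[0,h(\gamma)]$), $\gamma_h=\gamma\circ\nu_\gamma^{-1}$. For $\Gamma\subset\Gamma^*$, $\mathrm{Mod}_p(\Gamma)=\inf\int_Xg^p\,dm$ over Borel $g\ge0$ with $\int_\gamma g\ge1$ for all $\gamma\in\Gamma$; ''$p$-almost every path'' means all paths of $\Gamma^*$ outside a family of $p$-modulus zero. A Borel $\rho\ge0$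 is an upper gradient of $f$ if $|f(x)-f(y)|\le\int_\gamma\rho$ for every $\gamma\in\Gamma^*$ with endpoints $x,y$ (with $f(x),f(y)$ finite), and a $p$-weak upper gradient if this holds for $p$-almost every $\gamma\in\Gamma^*$. $f$ is $ACC_p$ if $f\circ\gamma_h$ is absolutely continuous for $p$-almost every $\gamma\in\Gamma^*$. *)

From HB Require Import structures.
From mathcomp Require Import all_boot all_order all_algebra.
From mathcomp Require Import all_classical all_reals all_analysis.
From mathcomp Require Import measurable_realfun.

Set Implicit Arguments.
Unset Strict Implicit.
Unset Printing Implicit Defensive.

Import Order.TTheory GRing.Theory Num.Theory.
Import numFieldNormedType.Exports.

Local Open Scope classical_set_scope.
Local Open Scope ring_scope.

Notation Borel X := (g_sigma_algebraType (@open X)).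

Section Defs.
Variables (R : realType) (X : pseudoPMetricType R).

(* A xpath gamma : [a, b] -> X, represented by its endpoints and a function
   R -> X (only its values on [a, b] matter). *)
Record xpath := XPath { pa : R; pb : R; pf : R -> X }.

Definition is_path (g : xpath) :=
  pa g <= pb g /\ {within `[pa g, pb g], continuous pf g}.

Definition nontrivial (g : xpath) := pa g < pb g.

Definition Im (g : xpath) : set X := pf g @` `[pa g, pb g].

Definition subpath (g : xpath) (c d : R) := XPath c d (pf g).

Definition is_subpath_range (g : xpath) (c d : R) :=
  pa g <= c /\ c <= d /\ d <= pb g.

Definition Gamma_mu (mu : set (Borel X) -> \bar R) : set xpath :=
  [set g | is_path g /\ nontrivial g /\ {in `[pa g, pb g] &, injective (pf g)} /\
     forall c d, is_subpath_range g c d -> c < d ->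
       (0 < mu (Im (subpath g c d) : set (Borel X)))%E /\
       (mu (Im (subpath g c d) : set (Borel X)) < +oo)%E].

Definition lint (mu : {measure set (Borel X) -> \bar R}) (g : Borel X -> \bar R)
  (gm : xpath) : \bar R :=
  (\int[mu]_(x in (Im gm : set (Borel X))) g x)%E.

Definition hlen (mu : set (Borel X) -> \bar R) (g : xpath) : \bar R :=
  mu (Im g : set (Borel X)).

Definition nu (mu : set (Borel X) -> \bar R) (g : xpath) (x : R) : \bar R :=
  mu (pf g @` `[pa g, x] : set (Borel X)).

Definition nu_inv (mu : set (Borel X) -> \bar R) (g : xpath) (t : R) : R :=
  xget (pa g) [set x | x \in `[pa g, pb g] /\ nu mu g x = t%:E].

Definition gamma_h (mu : set (Borel X) -> \bar R) (g : xpath) : R -> X :=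
  pf g \o nu_inv mu g.

Definition abs_continuous_on (F : R -> R) (u v : R) :=
  forall e : R, 0 < e -> exists2 delta : R, 0 < delta &
    forall (n : nat) (s t : 'I_n -> R),
      (forall i, u <= s i /\ s i <= t i /\ t i <= v) ->
      (forall i j, i != j -> t i <= s j \/ t j <= s i) ->
      \sum_(i < n) (t i - s i) < delta ->
      \sum_(i < n) `|F (t i) - F (s i)| < e.

Definition admissible (mu : {measure set (Borel X) -> \bar R}) (Gam : set xpath)
  (g : Borel X -> \bar R) :=
  measurable_fun setT g /\ (forall x, (0 <= g x)%E) /\
  forall gm, Gam gm -> (1 <= lint mu g gm)%E.

Definition Modp (mu m : {measure set (Borel X) -> \bar R}) (p : R) (Gam : set xpath)
  : \bar R :=
  ereal_inf [set (\int[m]_x (g x `^ p))%E | g in admissible mu Gam].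

Definition p_ae (mu m : {measure set (Borel X) -> \bar R}) (p : R)
  (Gstar : set xpath) (P : xpath -> Prop) :=
  exists2 G0 : set xpath, G0 `<=` Gstar /\ Modp mu m p G0 = 0%E &
    forall gm, Gstar gm -> ~ G0 gm -> P gm.

Definition ug_ineq (mu : {measure set (Borel X) -> \bar R}) (f : X -> R)
  (rho : Borel X -> \bar R) (gm : xpath) :=
  (`|f (pf gm (pa gm)) - f (pf gm (pb gm))|%:E <= lint mu rho gm)%E.

Definition upper_gradient (mu : {measure set (Borel X) -> \bar R}) (Gstar : set xpath)
  (f : X -> R) (rho : Borel X -> \bar R) :=
  measurable_fun setT rho /\ (forall x, (0 <= rho x)%E) /\
  forall gm, Gstar gm -> ug_ineq mu f rho gm.

Definition p_weak_upper_gradient (mu m : {measure set (Borel X) -> \bar R}) (p : R)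
  (Gstar : set xpath) (f : X -> R) (rho : Borel X -> \bar R) :=
  measurable_fun setT rho /\ (forall x, (0 <= rho x)%E) /\
  p_ae mu m p Gstar (ug_ineq mu f rho).

Definition ACC_p (mu m : {measure set (Borel X) -> \bar R}) (p : R)
  (Gstar : set xpath) (f : X -> R) :=
  p_ae mu m p Gstar (fun gm =>
    abs_continuous_on (f \o gamma_h mu gm) 0 (fine (hlen mu gm))).

End Defs.

(* Call a path γ : [a, b] -> X of Γ* good if f ∘ γ_h is absolutely continuous
   and γ meets the m-null set N ⊇ {x ∈ F | f x ≠ 0} in a μ-null set. Raising an
   admissible function to +oo on N does not change its p-energy, so p-almost
   every path is good. Along a good path, non-atomicity of μ makes
   s ↦ μ(γ[a, s]) continuous, hence f ∘ γ is continuous. If f ∘ γ has no zero,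
   γ meets F only inside N, so ρ and ρ χ_{X∖F} have the same integral along γ.
   Otherwise let k1 ≤ k2 be the first and last zeros of f ∘ γ: then
   |f(γ a) - f(γ b)| ≤ |f(γ a) - f(γ k1)| + |f(γ k2) - f(γ b)|, and the same
   argument on γ[a, k1] and γ[k2, b], which share at most one point, bounds the
   right-hand side by the integral of ρ χ_{X∖F} along γ. *)

From Pilot Require Import Defs.
From HB Require Import structures.
From mathcomp Require Import all_boot all_order all_algebra.
From mathcomp Require Import all_classical all_reals all_analysis.
From mathcomp Require Import measurable_realfun.
From mathcomp Require Import lra.
Import Order.TTheory GRing.Theory Num.Theory.
Import numFieldNormedType.Exports.
Local Open Scope classical_set_scope.
Local Open Scope ring_scope.

Lemma measurable_fun_in {d} {T : measurableType d} (A : set T) :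
  measurable A -> measurable_fun setT (fun x => x \in A).
Proof.
move=> mA; apply: (measurable_fun_bool true) => //.
rewrite setTI (_ : _ @^-1` _ = A) //.
by apply/seteqP; split => x /= => [/set_mem|/mem_set].
Qed.

Section BorelSets.
Context {R : realType} {X : pseudoPMetricType R}.

Lemma closed_Borel_measurable [A : set X] :
  closed A -> measurable (A : set (Borel X)).
Proof.
move=> cA; rewrite -[A]setCK; apply: measurableC; apply: sub_gen_smallest.
exact: closed_openC.
Qed.

Hypothesis hX : hausdorff_space X.

Lemma measurable_set1_Borel (x : X) : measurable ([set x] : set (Borel X)).
Proof.
by apply: closed_Borel_measurable; apply: accessible_closed_set1;
  exact: hausdorff_accessible.
Qed.

Lemma measurable_image_segment (g : R -> X) (c d : R) :
  {within `[c, d], continuous g} -> measurable (g @` `[c, d] : set (Borel X)).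
Proof.
move=> cg; apply: closed_Borel_measurable; apply: compact_closed => //.
by apply: (continuous_compact cg); exact: segment_compact.
Qed.

End BorelSets.

Section NullTrace.
Context {R : realType} {X : pseudoPMetricType R}.
Context {mu m : {measure set Borel X -> \bar R}} {p : R}.

Local Notation ImB g := (Defs.Im g : set (Borel X)).

Lemma Modp_ge0 (G : set (xpath X)) : (0 <= Modp mu m p G)%E.
Proof.
by apply: le_ereal_inf_tmp => _ [h _ <-]; apply: integral_ge0 => x _;
  exact: poweR_ge0.
Qed.

Lemma Modp_setU_null_trace (G G1 : set (xpath X)) (N : set (Borel X)) :
  measurable N -> m N = 0%E ->
  (forall g, (G `|` G1) g -> measurable (ImB g)) ->
  (forall g, G1 g -> mu (ImB g `&` N) != 0%E) ->
  (Modp mu m p (G `|` G1) <= Modp mu m p G)%E.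
Proof.
move=> mN mN0 mIm hG1; apply: le_ereal_inf_tmp => _ [h0 [mh0 [h00 adm0]] <-].
pose h x := if x \in N then +oo%E else h0 x.
have mh : measurable_fun setT h.
  by apply: measurable_fun_ifT => //; exact: measurable_fun_in.
have h0h x : (h0 x <= h x)%E by rewrite /h; case: ifP => _; [exact: leey|].
have h_ge0 x : (0 <= h x)%E := le_trans (h00 x) (h0h x).
apply: (@le_trans _ _ (\int[m]_x (h x `^ p))%E).
  apply: ereal_inf_lbound; exists h => //; split=> //; split=> // g Gg.
  have mg := mIm g Gg; case: Gg => [Gg|G1g].
    apply: le_trans (adm0 _ Gg) _; apply: ge0_le_integral => //.
    - exact: measurable_funS mh0.
    - exact: measurable_funS mh.
  have mgN : measurable (ImB g `&` N) by exact: measurableI.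
  have hN : (1 <= \int[mu]_(x in ImB g `&` N) h x)%E.
    rewrite (eq_integral (cst +oo%E)); last first.
      by move=> x; rewrite inE => -[_ Nx]; rewrite /h mem_set.
    by rewrite integral_cst // gt0_mulye ?leey // lt0e hG1 ?measure_ge0.
  apply: le_trans hN _; apply: ge0_subset_integral => //.
  exact: measurable_funS mh.
have mhp : measurable_fun setT (fun x => h x `^ p)%E.
  exact: measurableT_comp (measurable_poweR p) mh.
rewrite (ge0_negligible_integral mN _ mhp) //;
  last by move=> *; exact: poweR_ge0.
rewrite (eq_integral (fun x => h0 x `^ p)%E); last first.
  by move=> x; rewrite inE => -[_ Nx]; rewrite /h memNset.
apply: ge0_subset_integral => //; first exact: measurableD.
- exact: measurableT_comp (measurable_poweR p) mh0.
- by move=> x _; exact: poweR_ge0.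
Qed.

Lemma p_ae_null_trace [Gstar : set (xpath X)] [P : xpath X -> Prop]
    [N : set (Borel X)] :
  (forall g, Gstar g -> measurable (ImB g)) -> measurable N -> m N = 0%E ->
  p_ae mu m p Gstar P ->
  p_ae mu m p Gstar (fun g => P g /\ mu (ImB g `&` N) = 0%E).
Proof.
move=> mIm mN mN0 [G0 [G0S MG0] hG0].
pose G1 := [set g | Gstar g /\ mu (ImB g `&` N) != 0%E].
have GS : G0 `|` G1 `<=` Gstar by move=> g [/G0S|[]].
exists (G0 `|` G1).
  split=> //; apply/le_anti; rewrite Modp_ge0 andbT -MG0.
  apply: (Modp_setU_null_trace _ _ _ mN mN0).
  - by move=> g Gg; apply: mIm; exact: GS.
  - by move=> g [].
move=> g Gg nG; split; first by apply: hG0 => // G0g; apply: nG; left.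
by apply: contrapT => nz; apply: nG; right; split => //; apply/eqP.
Qed.

End NullTrace.

Lemma ge0_integral_if_null {d} {T : measurableType d} {R : realType}
    (mu : {measure set T -> \bar R}) [D E P : set T] [h : T -> \bar R] :
  measurable D -> measurable E -> measurable P -> mu P = 0%E ->
  D `&` E `<=` P -> measurable_fun setT h -> (forall x, 0 <= h x)%E ->
  (\int[mu]_(x in D) (if x \in E then 0 else h x) = \int[mu]_(x in D) h x)%E.
Proof.
move=> mD mE mP P0 DEP mh h0.
have mhE : measurable_fun setT (fun x => if x \in E then 0%E else h x).
  by apply: measurable_fun_ifT => //; exact: measurable_fun_in.
rewrite (ge0_negligible_integral mP mD) //; last 2 first.
- exact: measurable_funS mhE.
- by move=> x _; case: ifP.
rewrite [RHS](ge0_negligible_integral mP mD) //; last exact: measurable_funS mh.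
apply: eq_integral => x; rewrite inE => -[Dx nPx].
by rewrite memNset // => Ex; apply/nPx/DEP.
Qed.

Lemma abs_continuous_on_uniform {R : realType} [F : R -> R] [u v e : R] :
  abs_continuous_on F u v -> 0 < e -> exists2 delta, 0 < delta &
    forall s t, u <= s -> s <= t -> t <= v -> t - s < delta -> `|F t - F s| < e.
Proof.
move=> AC e0; have [delta d0 Hd] := AC e e0; exists delta => // s t us st tv.
have := Hd 1%N (fun _ => s) (fun _ => t); rewrite !big_ord1; apply=> // i j.
by rewrite !ord1 eqxx.
Qed.

Section GammaMuPath.
Context {R : realType} {X : pseudoPMetricType R}.
Hypothesis hX : hausdorff_space X.
Context {mu : {measure set Borel X -> \bar R}}.
Hypothesis mu_nonatomic : forall x : X, mu [set x] = 0%E.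
Context {g : xpath X}.
Hypothesis hg : Gamma_mu mu g.

Local Notation a := (pa g).
Local Notation b := (pb g).
Local Notation γ := (pf g).
Local Notation seg c d := (γ @` `[c, d] : set (Borel X)).

Lemma path_lt : a < b. Proof. by case: hg => _ []. Qed.

Lemma path_inj : {in `[a, b] &, injective γ}. Proof. by case: hg => _ [_ []]. Qed.

Lemma seg_sub [c d] : a <= c -> d <= b -> `[c, d] `<=` `[a, b].
Proof.
move=> ac db x; rewrite /= !in_itv/= => /andP[cx xd].
by rewrite (le_trans ac cx) (le_trans xd db).
Qed.

Lemma measurable_seg [c d] : a <= c -> d <= b -> measurable (seg c d).
Proof.
move=> ac db; apply: measurable_image_segment => //.
case: hg => -[_ cg] _; apply: continuous_subspaceW cg; exact: seg_sub.
Qed.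

Lemma seg_gt0 [c d] : a <= c -> c < d -> d <= b -> (0 < mu (seg c d))%E.
Proof.
move=> ac cd db; case: hg => _ [_ [_ h]].
by have [] := h c d (conj ac (conj (ltW cd) db)) cd.
Qed.

Lemma seg_fin_num [c d] : a <= c -> d <= b -> mu (seg c d) \is a fin_num.
Proof.
move=> ac db; rewrite ge0_fin_numE ?measure_ge0 //.
have ab := path_lt; have [_ [_ [_ /(_ a b) hab]]] := hg.
have [_ /(le_lt_trans _)] := hab (conj (lexx a) (conj (ltW ab) (lexx b))) ab.
apply; apply: le_measure; rewrite ?inE.
- exact: measurable_seg.
- exact: measurable_seg.
- exact/image_subset/seg_sub.
Qed.

Let mem_ab x : a <= x -> x <= b -> x \in `[a, b].
Proof. by move=> ax xb; rewrite in_itv/= ax xb. Qed.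

Lemma seg_splitD [r s t] : a <= r -> r <= s -> s <= t -> t <= b ->
  seg r t = seg r s `|` (seg s t `\ γ s).
Proof.
move=> ar rs st tb; apply/seteqP; split => y.
  case=> x; rewrite /= in_itv/= => /andP[rx xt] <-.
  have [xs|sx] := leP x s.
    by left; exists x => //; rewrite /= in_itv/= rx xs.
  right; split; first by exists x => //; rewrite /= in_itv/= (ltW sx) xt.
  move=> /= /path_inj xs; move: sx; rewrite xs ?ltxx// mem_ab; lra.
case=> [[x]|[[x]]]; rewrite /= in_itv/= => /andP[h1 h2] <-.
  by exists x => //; rewrite /= in_itv/= h1 (le_trans h2 st).
by move=> _; exists x => //; rewrite /= in_itv/= (le_trans rs h1) h2.
Qed.

Lemma seg_splitD_disj [r s t] : a <= r -> r <= s -> s <= t -> t <= b ->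
  seg r s `&` (seg s t `\ γ s) = set0.
Proof.
move=> ar rs st tb; apply/seteqP; split => // y [[x1]].
rewrite /= in_itv/= => /andP[h1 h2] <- [[x2]].
rewrite /= in_itv/= => /andP[h3 h4].
move=> /path_inj e; apply; rewrite (_ : x1 = s) //.
apply/le_anti; rewrite h2 -e ?h3 ?mem_ab //; lra.
Qed.

Lemma ge0_integral_segD [r s t] (h : Borel X -> \bar R) :
  a <= r -> r <= s -> s <= t -> t <= b ->
  measurable_fun setT h -> (forall x, 0 <= h x)%E ->
  (\int[mu]_(x in seg r t) h x =
   \int[mu]_(x in seg r s) h x + \int[mu]_(x in seg s t) h x)%E.
Proof.
move=> ar rs st tb mh h0.
have ms1 := measurable_set1_Borel hX (γ s).
have mst : measurable (seg s t) by apply: measurable_seg; lra.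
have mrs : measurable (seg r s) by apply: measurable_seg; lra.
rewrite (seg_splitD ar rs st tb).
rewrite (ge0_integral_setU _ mrs (measurableD mst ms1)).
- rewrite [in RHS](ge0_negligible_integral ms1 mst) //.
  exact: measurable_funS mh.
- exact: measurable_funS mh.
- by move=> x _.
- by rewrite disj_set2E (seg_splitD_disj ar rs st tb).
Qed.

Lemma measure_segD [r s t] : a <= r -> r <= s -> s <= t -> t <= b ->
  mu (seg r t) = (mu (seg r s) + mu (seg s t))%E.
Proof.
move=> ar rs st tb.
have := ge0_integral_segD (cst 1%E) ar rs st tb
  (measurable_cst _) (fun=> lee01).
by rewrite !integral_cst ?mul1e //; apply: measurable_seg; lra.
Qed.

Lemma fine_nuD [s t] : a <= s -> s <= t -> t <= b ->
  fine (nu mu g t) = fine (nu mu g s) + fine (mu (seg s t)).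
Proof.
move=> as_ st tb; rewrite /nu (measure_segD (lexx a) as_ st tb) fineD //.
- by apply: seg_fin_num; lra.
- by apply: seg_fin_num; lra.
Qed.

Lemma fine_nu_le [s t] : a <= s -> s <= t -> t <= b ->
  fine (nu mu g s) <= fine (nu mu g t).
Proof.
by move=> as_ st tb; rewrite (fine_nuD as_ st tb) lerDl fine_ge0 ?measure_ge0.
Qed.

Lemma fine_nu_lt [s t] : a <= s -> s < t -> t <= b ->
  fine (nu mu g s) < fine (nu mu g t).
Proof.
move=> as_ st tb; rewrite (fine_nuD as_ (ltW st) tb) ltrDl fine_gt0 //.
by rewrite seg_gt0 //= -ge0_fin_numE ?measure_ge0 // seg_fin_num //; lra.
Qed.

Lemma nu_invK [s] : a <= s -> s <= b -> nu_inv mu g (fine (nu mu g s)) = s.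
Proof.
move=> as_ sb; apply: xget_unique.
  by split; [exact: mem_ab|rewrite fineK // seg_fin_num].
move=> y []; rewrite in_itv/= => /andP[ay yb] /(congr1 fine) /= nuy.
have [ys|sy|//] := ltgtP y s.
  by move: (fine_nu_lt ay ys sb); rewrite nuy ltxx.
by move: (fine_nu_lt as_ sy yb); rewrite nuy ltxx.
Qed.

Let seg_around (x : R) n :=
  seg (Num.max a (x - n.+1%:R^-1)) (Num.min b (x + n.+1%:R^-1)).

Let seg_around_sub (x : R) n s t : a <= s -> t <= b ->
  x - n.+1%:R^-1 <= s -> t <= x + n.+1%:R^-1 -> seg s t `<=` seg_around x n.
Proof.
move=> as_ tb xs tx y [z]; rewrite /= in_itv/= => /andP[sz zt] <-.
exists z => //.
rewrite /= in_itv/= ge_max le_min.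
by rewrite !(le_trans as_ sz, le_trans xs sz, le_trans zt tb, le_trans zt tx).
Qed.

Let seg_around_shrink (x : R) : a <= x -> x <= b ->
  \bigcap_n seg_around x n `<=` [set γ x].
Proof.
move=> ax xb y Ay; have [t0 + yt0] := Ay 0%N I.
rewrite /= in_itv/= ge_max le_min => /andP[/andP[at0 _] /andP[t0b _]].
have near_t0 n : `|t0 - x| <= n.+1%:R^-1.
  have [tn + ytn] := Ay n I; rewrite /= in_itv/= ge_max le_min.
  move=> /andP[/andP[atn h1] /andP[tnb h2]].
  have tnt0 : tn = t0 by apply: path_inj; rewrite ?mem_ab ?ytn.
  by rewrite -tnt0 ler_distl h1 h2.
rewrite /= -yt0 (_ : t0 = x) //; apply/eqP; rewrite -subr_eq0 -normr_le0.
rewrite leNgt; apply/negP => t0x.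
have := near_t0 (Num.truncn `|t0 - x|^-1); rewrite leNgt => /negP; apply.
by rewrite -[ltRHS]invrK ltf_pV2 ?posrE ?invr_gt0 // truncnS_gt.
Qed.

Lemma seg_measure_small [x delta] : a <= x -> x <= b -> 0 < delta ->
  exists2 eta : R, 0 < eta & forall s t, a <= s -> t <= b ->
    x - eta <= s -> t <= x + eta -> (mu (seg s t) < delta%:E)%E.
Proof.
move=> ax xb d0.
have mA n : measurable (seg_around x n).
  by apply: measurable_seg; rewrite ?le_max ?ge_min lexx ?orbT.
have A0fin : (mu (seg_around x 0) < +oo)%E.
  by rewrite -ge0_fin_numE ?measure_ge0 // seg_fin_num // ?le_max ?ge_min lexx.
have A_decr : {homo seg_around x : n m / (n <= m)%N >-> (m <= n)%O}.
  move=> n m nm; apply/subsetPset.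
  have e_le : m.+1%:R^-1 <= n.+1%:R^-1 :> R.
    by rewrite lef_pV2 ?posrE // ler_nat.
  apply: seg_around_sub; rewrite ?le_max ?ge_min ?lexx ?orbT //.
  - by rewrite lerD2l lerN2 e_le orbT.
  - by rewrite lerD2l e_le orbT.
have mu_cap0 : mu (\bigcap_n seg_around x n) = 0%E.
  apply/le_anti; rewrite measure_ge0 andbT -(mu_nonatomic (γ x)).
  apply: le_measure; rewrite ?inE; [exact: bigcapT_measurable|
    exact: measurable_set1_Borel|exact: seg_around_shrink].
have := nonincreasing_cvg_mu A0fin mA (bigcapT_measurable mA) A_decr.
rewrite mu_cap0 => /(_ _ (nbhs_open_ereal_lt (f := fun=> delta) d0)) [i _ Hi].
exists i.+1%:R^-1 => // s t as_ tb xs tx.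
apply: le_lt_trans (Hi i (leqnn i)); apply: le_measure; rewrite ?inE //.
- by apply: measurable_seg.
- exact: seg_around_sub.
Qed.

Lemma gamma_h_nu [s] : a <= s -> s <= b -> gamma_h mu g (fine (nu mu g s)) = γ s.
Proof. by move=> as_ sb; rewrite /gamma_h /= nu_invK. Qed.

Lemma path_comp_continuous [f : X -> R] [x e : R] :
  abs_continuous_on (f \o gamma_h mu g) 0 (fine (hlen mu g)) ->
  a <= x -> x <= b -> 0 < e -> exists2 eta : R, 0 < eta &
    forall t, a <= t -> t <= b -> `|t - x| <= eta -> `|f (γ t) - f (γ x)| < e.
Proof.
move=> AC ax xb e0.
have [delta d0 Hd] := abs_continuous_on_uniform AC e0.
have [eta eta0 Heta] := seg_measure_small ax xb d0.
have close s t : a <= s -> s <= t -> t <= b -> x - eta <= s -> t <= x + eta ->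
    `|f (γ t) - f (γ s)| < e.
  move=> as_ st tb xs tx.
  rewrite -(gamma_h_nu as_ (le_trans st tb)) -(gamma_h_nu (le_trans as_ st) tb).
  apply: Hd.
  - exact/fine_ge0/measure_ge0.
  - exact: fine_nu_le.
  - exact: (fine_nu_le (le_trans as_ st) tb (lexx _)).
  - rewrite (fine_nuD as_ st tb) addrAC subrr add0r -lte_fin fineK ?Heta //.
    by apply: seg_fin_num; lra.
exists eta => // t at_ tb; rewrite ler_distl => /andP[xt tx].
have x_eta : x - eta <= x <= x + eta by rewrite gerBl lerDl ltW.
have [xt'|tx'] := leP x t; first by apply: close => //; case/andP: x_eta.
by rewrite distrC; apply: close => //; [exact: ltW|case/andP: x_eta].
Qed.

Lemma path_comp_zero_closed [f : X -> R] :
  abs_continuous_on (f \o gamma_h mu g) 0 (fine (hlen mu g)) ->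
  forall k, a <= k -> k <= b ->
  (forall eta : R, 0 < eta ->
    exists2 s, [/\ a <= s, s <= b & f (γ s) = 0] & `|s - k| <= eta) ->
  f (γ k) = 0.
Proof.
move=> AC k ak kb adh; apply/eqP; apply: contraT => fk0.
have fk_gt0 : 0 < `|f (γ k)| by rewrite normr_gt0.
have [eta eta0 Heta] := path_comp_continuous AC ak kb fk_gt0.
have [s [as_ sb fs0] sk] := adh eta eta0.
by have := Heta s as_ sb sk; rewrite fs0 sub0r normrN ltxx.
Qed.

Context {Gstar : set (xpath X)}.
Hypothesis hsub : forall gm c d, Gstar gm -> is_subpath_range gm c d -> c < d ->
  Gstar (subpath gm c d).
Context {f : X -> R} {F : set X} {N : set (Borel X)}.
Hypotheses (mF : measurable (F : set (Borel X))) (mN : measurable N).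
Hypothesis hNF : forall x : X, F x -> f x <> 0 -> N x.
Context {rho : Borel X -> \bar R}.
Hypothesis hrho : upper_gradient mu Gstar f rho.

Let rhoF x := if x \in (F : set (Borel X)) then 0%E else rho x.

Let mrho : measurable_fun setT rho. Proof. by case: hrho. Qed.
Let rho_ge0 x : (0 <= rho x)%E. Proof. by case: hrho => _ []. Qed.
Let mrhoF : measurable_fun setT rhoF.
Proof. by apply: measurable_fun_ifT => //; exact: measurable_fun_in. Qed.
Let rhoF_ge0 x : (0 <= rhoF x)%E. Proof. by rewrite /rhoF; case: ifP. Qed.

Hypothesis Gg : Gstar g.
Hypothesis muN : mu ((Defs.Im g : set (Borel X)) `&` N) = 0%E.

Lemma seg_ug_off_F [c d] : a <= c -> c <= d -> d <= b ->
  (forall t, c < t -> t < d -> f (γ t) <> 0) ->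
  (`|f (γ c) - f (γ d)|%:E <= \int[mu]_(x in seg c d) rhoF x)%E.
Proof.
move=> ac cd db hcd; have [->|c_neq_d] := eqVneq c d.
  by rewrite subrr normr0 integral_ge0.
have {}cd : c < d by rewrite lt_neqAle c_neq_d cd.
have mIm : measurable (seg a b) by exact: measurable_seg.
have ms1 := measurable_set1_Borel hX.
pose P := seg a b `&` N `|` [set γ c] `|` [set γ d].
have mImN : measurable (seg a b `&` N) by exact: measurableI.
have mP : measurable P by do 2 apply: measurableU => //.
have P0 : mu P = 0%E.
  by rewrite !null_set_setU //; exact: measurableU.
rewrite (ge0_integral_if_null mu _ mF mP P0) //; last 2 first.
- by apply: measurable_seg.
- move=> y [[t]]; rewrite /= in_itv/= => /andP[ct td] <- Ft.
  have [->|tc] := eqVneq t c; first by left; right.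
  have [->|td'] := eqVneq t d; first by right.
  left; left; split.
    by exists t => //; rewrite /= in_itv/= (le_trans ac ct) (le_trans td db).
  apply: hNF => //; apply: hcd; first by rewrite lt_neqAle eq_sym tc.
  by rewrite lt_neqAle td' td.
have [_ [_ ug]] := hrho.
exact: (ug _ (hsub _ _ _ Gg (conj ac (conj (ltW cd) db)) cd)).
Qed.

Lemma ug_ineq_off_F :
  abs_continuous_on (f \o gamma_h mu g) 0 (fine (hlen mu g)) ->
  ug_ineq mu f rhoF g.
Proof.
move=> AC; have ab := path_lt.
pose S := [set t | [/\ a <= t, t <= b & f (γ t) = 0]].
have [[s0 Ss0]|S0] := pselect (S !=set0); last first.
  apply: seg_ug_off_F (lexx _) (ltW ab) (lexx _) _ => t at_ tb ft0.
  by apply: S0; exists t; split=> //; exact: ltW.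
have [as0 s0b _] := Ss0.
have lbS : has_lbound S by exists a => t [].
have ubS : has_ubound S by exists b => t [].
have supS : has_sup S by split=> //; exists s0.
pose k1 := inf S; pose k2 := sup S.
have ak1 : a <= k1 by apply: lb_le_inf => [|t []]; first by exists s0.
have k1s0 : k1 <= s0 by exact: ge_inf.
have s0k2 : s0 <= k2 by exact: sup_upper_bound.
have k2b : k2 <= b by apply: ge_sup => [|t []]; first by exists s0.
have k1b := le_trans k1s0 s0b; have k1k2 := le_trans k1s0 s0k2.
have fk1 : f (γ k1) = 0.
  apply: path_comp_zero_closed AC _ ak1 k1b _ => eta eta0.
  have [s Ss sk1] := inf_adherent eta0 (conj (ex_intro _ s0 Ss0) lbS).
  exists s => //; rewrite ler_distl (ltW sk1) andbT.
  by apply: le_trans (ge_inf lbS Ss); rewrite gerBl ltW.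
have fk2 : f (γ k2) = 0.
  apply: path_comp_zero_closed AC _ (le_trans ak1 k1k2) k2b _ => eta eta0.
  have [s Ss k2s] := sup_adherent eta0 supS.
  exists s => //; rewrite ler_distl (ltW k2s) /=.
  by rewrite (le_trans (sup_upper_bound supS Ss)) // lerDl ltW.
apply: (@le_trans _ _ ((`|f (γ a) - f (γ k1)| + `|f (γ k2) - f (γ b)|)%:E)).
  by rewrite fk1 fk2 subr0 sub0r normrN lee_fin ler_normB.
rewrite /lint EFinD.
rewrite (ge0_integral_segD rhoF (lexx a) ak1 k1b (lexx b) mrhoF rhoF_ge0).
apply: leeD.
  apply: seg_ug_off_F => // t at_ tk1 ft0.
  have St : S t by split=> //; apply: ltW; last exact: lt_le_trans tk1 k1b.
  by move: (ge_inf lbS St); rewrite leNgt tk1.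
apply: le_trans (seg_ug_off_F (le_trans ak1 k1k2) k2b (lexx b) _) _.
  move=> t k2t tb ft0.
  have St : S t.
    split=> //; last exact: ltW.
    exact: ltW (le_lt_trans (le_trans ak1 k1k2) k2t).
  by move: (sup_upper_bound supS St); rewrite leNgt k2t.
apply: ge0_subset_integral => //.
- by apply: measurable_seg => //; exact: le_trans ak1 k1k2.
- by apply: measurable_seg.
- exact: measurable_funS mrhoF.
- apply: image_subset => t; rewrite /= !in_itv/= => /andP[k2t ->].
  by rewrite (le_trans k1k2 k2t).
Qed.

End GammaMuPath.

Theorem lemma5p1 (R : realType) (X : pseudoPMetricType R)
  (hX : hausdorff_space X)
  (mu m : {measure set Borel X -> \bar R})
  (mu_nonatomic : forall x : X, mu [set x] = 0%E)
  (p : R) (hp : 0 < p)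
  (Gstar : set (xpath X))
  (hGstar : Gstar `<=` Gamma_mu mu)
  (hsub : forall g c d, Gstar g -> is_subpath_range g c d -> c < d ->
            Gstar (subpath g c d))
  (hjoin : forall x y : X, x <> y -> exists2 g, Gstar g &
            (pf g (pa g) = x /\ pf g (pb g) = y) \/
            (pf g (pa g) = y /\ pf g (pb g) = x))
  (F : set X) (hF : closed F)
  (f : X -> R) (hf : ACC_p mu m p Gstar f)
  (hfF : {ae m, forall x : Borel X, F x -> f x = 0})
  (rho : Borel X -> \bar R) (hrho : upper_gradient mu Gstar f rho) :
  p_weak_upper_gradient mu m p Gstar f
    (fun x => if x \in (F : set (Borel X)) then 0%E else rho x).
Proof.
have mF := closed_Borel_measurable hF.
have [N [mN mN0 NS]] := hfF.
have hNF x : F x -> f x <> 0 -> N x by move=> Fx fx0; apply: NS => /(_ Fx).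
have mIm g : Gstar g -> measurable (Defs.Im g : set (Borel X)).
  by move=> /hGstar hg; apply: (measurable_seg hX hg (lexx _) (lexx _)).
have [mrho [rho_ge0 _]] := hrho.
split; first by apply: measurable_fun_ifT => //; exact: measurable_fun_in.
split; first by move=> x; case: ifP.
have [G0 G0null hG0] := p_ae_null_trace mIm mN mN0 hf.
exists G0 => // g Gg /(hG0 g Gg) [AC muN].
exact (ug_ineq_off_F hX mu_nonatomic (hGstar _ Gg) hsub mF mN hNF hrho Gg
  muN AC).
Qed.
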